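(* Let $G$ be an elementary abelian $p$-group of $p$-rank $r$ and $k$ a field of characteristic $p$. Let $\alpha: k[t_1,\dots,t_s]/(t_1^p,\dots,t_s^p)\to kG$ be a flat map with image $A$. Then there exists a flat map $\beta: k[t_1,\dots,t_{r-s}]/(t_1^p,\dots,t_{r-s}^p)\to kG$, with image $B$, such that $kG$ is the internal tensor product $kG = A\otimes B$ (i.e. multiplication $A\otimes_k B\to kG$ is an isomorphism).
   Context: Write $kG\cong k[X_1,\dots,X_r]/(X_1^p,\dots,X_r^p)$ with $X_i=g_i-1$ for generators $g_i$ of $G$. A flat map $\alpha: k[t_1,\dots,t_s]/(t_1^p,\dots,t_s^p)\to kG$ is a $k$-algebra homomorphism such that $kG$ is projective over its image; equivalently, the classes of $\alpha(t_1),\dots,\alpha(t_s)$ in $\operatorname{Rad}(kG)/\operatorname{Rad}^2(kG)$ are $k$-linearly independent. Its image is called a flat subalgebra. *)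

From HB Require Import structures.
From mathcomp Require Import all_boot all_order all_algebra all_fingroup all_solvable all_field.
Set Implicit Arguments. Unset Strict Implicit. Unset Printing Implicit Defensive.
Import GRing.Theory.
Local Open Scope ring_scope.

Definition is_group_algebra (F : fieldType) (L : falgType F)
    (gT : finGroupType) (G : {group gT}) (e : gT -> L) : Prop :=
  [/\ e 1%g = 1,
      {in G &, forall x y, e (x * y)%g = e x * e y}
    & basis_of fullv [seq e x | x in G] ].

Definition in_rad (F : fieldType) (L : falgType F) (x : L) : Prop :=
  forall y : L, (1 - y * x) \is a GRing.unit.

Definition in_rad2 (F : fieldType) (L : falgType F) (x : L) : Prop :=
  exists n (a b : 'I_n -> L),
    (forall j, in_rad (a j) /\ in_rad (b j)) /\ x = \sum_(j < n) a j * b j.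

(* A k-algebra map alpha : k[t_1..t_s]/(t_1^p,..,t_s^p) -> L is given by the
   images u i = alpha(t_i), subject to the defining relations u_i^p = 0
   (and pairwise commutation). *)
Definition trunc_poly_hom (F : fieldType) (L : falgType F) (p s : nat)
    (u : 'I_s -> L) : Prop :=
  (forall i, u i ^+ p = 0) /\ (forall i j, u i * u j = u j * u i).

(* alpha is flat: the classes of alpha(t_i) in Rad(L)/Rad^2(L) are linearly
   independent. *)
Definition flat_map (F : fieldType) (L : falgType F) (p s : nat)
    (u : 'I_s -> L) : Prop :=
  trunc_poly_hom p u /\ (forall i, in_rad (u i)) /\
  (forall c : 'I_s -> F, in_rad2 (\sum_(i < s) c i *: u i) -> forall i, c i = 0).

Definition trunc_monomial (F : fieldType) (L : falgType F) (p s : nat)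
    (u : 'I_s -> L) (a : {ffun 'I_s -> 'I_p}) : L :=
  \prod_(i < s) u i ^+ a i.

(* The image of alpha: the span of the images of the monomial basis
   t^a (0 <= a_i < p) of k[t]/(t^p). *)
Definition flat_image (F : fieldType) (L : falgType F) (p s : nat)
    (u : 'I_s -> L) : {vspace L} :=
  <<[seq trunc_monomial u a | a : {ffun 'I_s -> 'I_p}]>>%VS.

(* L is the internal tensor product A (x) B: the multiplication map
   A (x)_k B -> L is an isomorphism, i.e. it maps the tensor basis
   (a_i (x) b_j) to a basis (a_i b_j) of L. *)
Definition internal_tensor (F : fieldType) (L : falgType F)
    (A B : {vspace L}) : Prop :=
  basis_of fullv [seq a * b | a <- vbasis A, b <- vbasis B].

From HB Require Import structures.
From mathcomp Require Import all_boot all_order all_algebra all_fingroup all_solvable all_field.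
From mathcomp Require Import mxabelem ring zify.
Set Implicit Arguments. Unset Strict Implicit. Unset Printing Implicit Defensive.
Import GRing.Theory.
Local Open Scope ring_scope.

(* kG is commutative and its radical is the augmentation ideal I, spanned by
   the nilpotent elements g - 1; modulo I^2 it is already spanned by the g - 1
   for r generators g of G. Flatness says that the u_i are independent modulo
   I^2, so some of these g - 1 complete them to a basis w of I / I^2. A
   nilpotent Nakayama argument shows that the product A B of the image A of u
   and the image B of w contains I, hence is kG. As dim A <= p^s,
   dim B <= p^|w| and dim kG = p^r, this forces |w| = r - s, and then the
   spanning family (a b) of kG, indexed by bases of A and B, has exactly
   dim kG members, so it is a basis. *)

Lemma mktuple_nth (T : Type) (x0 : T) (w : seq T) m :
  m = size w -> mktuple (fun j : 'I_m => nth x0 w j) = w :> seq T.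
Proof. by move=> ->; rewrite /= -[RHS](mkseq_nth x0) /mkseq -val_enum_ord -map_comp. Qed.

Lemma unitr1B_nilpotent (R : unitRingType) (z : R) n :
  z ^+ n = 0 -> (1 - z) \is a GRing.unit.
Proof.
move=> zn; set S := \sum_(i < n) z ^+ i.
have zS : GRing.comm (z - 1) S.
  apply: commr_sum => i _; apply: commr_sym; apply: commrB; last exact: commr1.
  exact/commr_sym/commrX/commr_refl.
have zSr : (z - 1) * S = -1 by rewrite -subrX1 zn sub0r.
by apply/unitrP; exists S; rewrite -opprB mulNr mulrN -zS zSr opprK.
Qed.

Section VectorSpaceFacts.
Variables (F : fieldType) (vT : vectType F).

Lemma free_modvP n (w : 'I_n -> vT) (K : {vspace vT}) :
  (forall c : 'I_n -> F, \sum_(i < n) c i *: w i \in K -> forall i, c i = 0) <->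
  free (mktuple w) /\ (<<mktuple w>> :&: K = 0)%VS.
Proof.
have sumE c : \sum_(i < n) c i *: (mktuple w)`_i = \sum_(i < n) c i *: w i.
  by apply: eq_bigr => i _; rewrite nth_mktuple.
split=> [indep | [/freeP freew capK0] c wcK].
  have freew : free (mktuple w).
    by apply/freeP => c c0; apply: indep; rewrite -sumE c0 mem0v.
  split=> //; apply/eqP; rewrite -subv0; apply/subvP => x /memv_capP[].
  move=> /(coord_span (X := mktuple w)) ->; rewrite sumE => /indep c0.
  by rewrite big1 ?mem0v // => i _; rewrite c0 scale0r.
apply: freew; apply/eqP; rewrite sumE -memv0 -capK0 memv_cap wcK andbT.
by apply: memv_suml => i _; rewrite memvZ // -tnth_mktuple memv_span ?mem_tnth.
Qed.

Lemma exists_span_complement (Y : seq vT) (K : {vspace vT}) :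
  exists2 w : seq vT, {subset w <= Y} &
    (<<Y>> <= K + <<w>>)%VS /\ \dim (K + <<w>>) = (\dim K + size w)%N.
Proof.
elim: Y K => [|y Y IH] K.
  by exists [::] => //; rewrite span_nil sub0v addv0 addn0.
have subYc w : {subset w <= Y} -> {subset w <= y :: Y}.
  by move=> wY z /wY zY; rewrite in_cons zY orbT.
have [yK | yNK] := boolP (y \in K).
  have [w /subYc wY [Yw dimw]] := IH K; exists w => //; split=> //.
  by rewrite span_cons subv_add Yw andbT (subv_trans _ (addvSl _ _)) // -memvE.
have [w wY [Yw dimw]] := IH (K + <[y]>)%VS.
exists (y :: w); first by move=> z; rewrite !in_cons => /orP[-> // | /wY ->]; rewrite orbT.
rewrite [<<y :: w>>%VS]span_cons addvA; split.
  by rewrite span_cons subv_add Yw andbT (subv_trans (addvSr K _) (addvSl _ _)).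
have Ky0 : (K :&: <[y]> = 0)%VS.
  apply/eqP; rewrite -subv0; apply/subvP => z /memv_capP[zK /vlineP[a za]].
  rewrite memv0; apply: contraR yNK => /eqP; rewrite za => /eqP.
  rewrite scaler_eq0 negb_or => /andP[a0 _].
  by rewrite -(scalerK a0 y) memvZ // -za.
have y0 : y != 0 by apply: contraNneq yNK => ->; rewrite mem0v.
by rewrite dimw (dimv_disjoint_sum Ky0) dim_vline y0 addn1 addnS.
Qed.

Lemma dimv_add_span_free (K : {vspace vT}) (w : seq vT) :
  \dim (K + <<w>>) = (\dim K + size w)%N -> free w /\ (K :&: <<w>> = 0)%VS.
Proof.
move=> dimKw; have := dimv_sum_cap K <<w>>; have := dim_span w.
rewrite dimKw => le_w cap; split; first by rewrite /free; apply/eqP; lia.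
by apply/eqP; rewrite -dimv_eq0; apply/eqP; lia.
Qed.

End VectorSpaceFacts.

Section FalgebraFacts.
Variables (F : fieldType) (L : falgType F).

Lemma prodv_span_subv (X Y : seq L) (T : {vspace L}) :
  {in X & Y, forall x y, x * y \in T} -> (<<X>> * <<Y>> <= T)%VS.
Proof.
move=> XYT; apply/prodvP => x y /(coord_span (X := in_tuple X)) ->
  /(coord_span (X := in_tuple Y)) ->.
rewrite mulr_suml; apply: memv_suml => i _; rewrite mulr_sumr.
apply: memv_suml => j _; rewrite -scalerAl -scalerAr !memvZ // XYT ?mem_nth //.
Qed.

Lemma memvX (U : {vspace L}) x n : x \in U -> x ^+ n \in (U ^+ n)%VS.
Proof.
move=> Ux; elim: n => [|n IH]; first by rewrite expr0 expv0 memv_line.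
by rewrite exprS expvSl memv_mul.
Qed.

Lemma nakayama_subv (I W R : {vspace L}) N :
  (W <= I)%VS -> (W <= R)%VS -> (R * R <= R)%VS ->
  (I <= W + I * I)%VS -> (I ^+ N = 0)%VS -> (I <= R)%VS.
Proof.
move=> WI WR RR IW IN.
have WkR k : (W ^+ k.+1 <= R)%VS.
  elim: k => [|k IH]; first by rewrite expv1.
  by rewrite expvSl (subv_trans _ RR) // prodvS.
have IkW k : (I ^+ k.+1 <= W ^+ k.+1 + I ^+ k.+2)%VS.
  elim: k => [|k IH]; first by rewrite expv1 expv2.
  rewrite expvSr (subv_trans (prodvSl _ IH)) // prodvDl -expvSr subv_add addvSr andbT.
  rewrite (subv_trans (prodvSr _ IW)) // prodvDr -expvSr addvS //.
  by rewrite (subv_trans (prodvSl _ (expvS k.+1 WI))) // -expv2 -expvD addn2.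
have IRk k : (I <= R + I ^+ k.+1)%VS.
  elim: k => [|k IH]; first by rewrite expv1 addvSr.
  rewrite (subv_trans IH) // -{2}[R]addvv -addvA addvS // (subv_trans (IkW k)) //.
  by rewrite addvS ?WkR.
by have := IRk N; rewrite expvSl IN prodv0 addv0.
Qed.

Lemma prodv_full_internal_tensor (A B : {vspace L}) :
  (A * B)%VS = fullv -> (\dim A * \dim B <= \dim (fullv : {vspace L}))%N ->
  internal_tensor A B.
Proof.
move=> ABfull dimAB; rewrite /internal_tensor basisEdim size_allpairs !size_tuple.
by rewrite dimAB andbT -ABfull unlock.
Qed.

End FalgebraFacts.

(* falgType has no commutative variant, so a copy of an [L] whose
   multiplication commutes is given the comRing structure by hand. *)
Definition comm_falg (F : fieldType) (L : falgType F)
  (mulC : commutative (@GRing.mul L)) : Type := L.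

Section CommutativeFalgebra.
Variables (F : fieldType) (L0 : falgType F).
Hypothesis mulC : commutative (@GRing.mul L0).
HB.instance Definition _ := Falgebra.on (comm_falg mulC).
HB.instance Definition _ :=
  GRing.PzSemiRing_hasCommutativeMul.Build (comm_falg mulC) mulC.
Local Notation L := (comm_falg mulC).

Lemma comm_prodvC (U V : {vspace L}) : (U * V = V * U)%VS.
Proof.
by apply/eqP; rewrite eqEsubv; apply/andP; split; apply/prodvP => x y Ux Vy;
  rewrite mulrC memv_mul.
Qed.

Lemma prodv_mul_closed (A B : {vspace L}) :
  (A * A <= A)%VS -> (B * B <= B)%VS -> ((A * B) * (A * B) <= A * B)%VS.
Proof.
move=> AA BB; rewrite -prodvA [(B * (A * B))%VS]prodvA [(B * A)%VS]comm_prodvC.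
by rewrite -prodvA prodvA prodvS.
Qed.

Lemma nilpotent_addv (U V : {vspace L}) a b :
  (U ^+ a = 0)%VS -> (V ^+ b = 0)%VS -> ((U + V) ^+ (a + b) = 0)%VS.
Proof.
move=> Ua Vb.
suff UVk k i j : (a + b <= i + j + k)%N -> (U ^+ i * V ^+ j * (U + V) ^+ k = 0)%VS.
  by have := UVk (a + b)%N 0%N 0%N (leqnn _); rewrite !expv0 !prod1v.
elim: k i j => [|k IH] i j hk.
  rewrite addn0 in hk; have [ai | ia] := leqP a i.
    by rewrite -(subnKC ai) expvD Ua !prod0v.
  have bj : (b <= j)%N by lia.
  by rewrite -(subnKC bj) expvD Vb prod0v prodv0 prod0v.
rewrite expvSl prodvDl !prodvDr.
have -> : (U ^+ i * V ^+ j * (U * (U + V) ^+ k) = U ^+ i.+1 * V ^+ j * (U + V) ^+ k)%VS.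
  rewrite expvSr -!prodvA [(V ^+ j * (U * _))%VS]prodvA.
  by rewrite [(V ^+ j * U)%VS]comm_prodvC -!prodvA.
have -> : (U ^+ i * V ^+ j * (V * (U + V) ^+ k) = U ^+ i * V ^+ j.+1 * (U + V) ^+ k)%VS.
  by rewrite expvSr -!prodvA.
by rewrite !IH ?addv0 //; lia.
Qed.

Lemma expv_span_eq0 (X : seq L) n : {in X, forall x, x ^+ n = 0} ->
  (<<X>> ^+ (n * size X).+1 = 0)%VS.
Proof.
elim: X => [|x X IH] Xn; first by rewrite span_nil expv0n.
rewrite span_cons /= mulnS -addnS nilpotent_addv //.
  by rewrite expv_line Xn ?mem_head // -span_seq1 span_nil.
by apply: IH => y Xy; rewrite Xn // in_cons Xy orbT.
Qed.

Section TruncatedPolynomialImage.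
Variables (p s : nat) (u : 'I_s -> L).

Lemma mem_flat_image (a : {ffun 'I_s -> 'I_p}) :
  trunc_monomial u a \in flat_image p u.
Proof. by apply: memv_span; apply/mapP; exists a; rewrite ?mem_enum. Qed.

Lemma flat_image1 : (0 < p)%N -> 1 \in flat_image p u.
Proof.
move=> p_gt0; have := mem_flat_image [ffun _ => Ordinal p_gt0].
by rewrite /trunc_monomial big1 // => i _; rewrite ffunE expr0.
Qed.

Lemma flat_image_gen i : (1 < p)%N -> u i \in flat_image p u.
Proof.
move=> p_gt1.
have := mem_flat_image [ffun j => Ordinal (leq_ltn_trans (leq_b1 (j == i)) p_gt1)].
rewrite /trunc_monomial (bigD1 i) //= big1 ?mulr1 ?ffunE ?eqxx ?expr1 //.
by move=> j /negbTE ji; rewrite ffunE /= ji expr0.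
Qed.

Lemma dim_flat_image : (\dim (flat_image p u) <= p ^ s)%N.
Proof.
apply: leq_trans (dim_span _) _.
by rewrite size_map -cardE card_ffun !card_ord.
Qed.

Lemma flat_image_mul_closed : (forall i, u i ^+ p = 0) ->
  (flat_image p u * flat_image p u <= flat_image p u)%VS.
Proof.
move=> up; apply: prodv_span_subv => _ _ /mapP[a _ ->] /mapP[b _ ->].
have -> : trunc_monomial u a * trunc_monomial u b = \prod_(i < s) u i ^+ (a i + b i).
  by rewrite /trunc_monomial -big_split; apply: eq_bigr => i _; rewrite exprD.
have [/forallP ab_ltp | ] := boolP [forall i, (a i + b i < p)%N].
  have := mem_flat_image [ffun i => Ordinal (ab_ltp i)].
  by rewrite /trunc_monomial; under eq_bigr do rewrite ffunE.
rewrite negb_forall => /existsP[i]; rewrite -leqNgt => p_le.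
by rewrite (bigD1 i) //= -(subnKC p_le) exprD up !mul0r mem0v.
Qed.

End TruncatedPolynomialImage.

Section GroupAlgebra.
Variables (p : nat) (gT : finGroupType) (G : {group gT}) (e : gT -> L).
Hypotheses (p_pr : prime p) (pcharF : p \in [pchar F]) (abelG : (p.-abelem G)%g)
  (kG : is_group_algebra G e).

Definition aug_gens := [seq e g - 1 | g in G].
(* The augmentation ideal of kG; by [in_radP] it is the radical. *)
Definition aug := <<aug_gens>>%VS.

Lemma group_algebra1 : e 1%g = 1. Proof. by case: kG. Qed.

Lemma group_algebraM : {in G &, forall x y, e (x * y)%g = e x * e y}.
Proof. by case: kG. Qed.

Lemma group_algebraX g n : g \in G -> e (g ^+ n)%g = e g ^+ n.
Proof.
move=> Gg; elim: n => [|n IH]; first by rewrite expg0 expr0 group_algebra1.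
by rewrite expgS group_algebraM ?groupX // IH exprS.
Qed.

Lemma mem_aug_gens g : g \in G -> e g - 1 \in aug_gens.
Proof. exact: image_f. Qed.

Lemma aug_gensP x : x \in aug_gens -> exists2 g, g \in G & x = e g - 1.
Proof. by case/imageP => g Gg ->; exists g. Qed.

Lemma aug_gens_expp x : x \in aug_gens -> x ^+ p = 0.
Proof.
case/aug_gensP => g Gg ->; have /(abelemP p_pr) [_ gp1] := abelG.
have pcharL : p \in [pchar L] by rewrite (pchar_lalg L).
have := pFrobenius_autB_comm pcharL (commr1 (e g)); rewrite !pFrobenius_autE => ->.
by rewrite -group_algebraX // gp1 // group_algebra1 expr1n subrr.
Qed.

Lemma aug_nilpotent : (aug ^+ (p * size aug_gens).+1 = 0)%VS.
Proof. exact/expv_span_eq0/aug_gens_expp. Qed.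

Lemma memv_aug_nilpotent x : x \in aug -> exists N, x ^+ N = 0.
Proof.
move=> /(memvX (p * size aug_gens).+1); rewrite aug_nilpotent memv0 => /eqP xN0.
by exists (p * size aug_gens).+1.
Qed.

Lemma aug_decomp x : exists c : F, x - c%:A \in aug.
Proof.
have [_ _ basis_e] := kG.
have : x \in <<[seq e g | g in G]>>%VS by rewrite (span_basis basis_e) memvf.
move=> /(coord_span (X := in_tuple _)) ->.
exists (\sum_i coord (in_tuple [seq e g | g in G]) i x).
rewrite scaler_suml -sumrB; apply: memv_suml => i _.
rewrite -scalerBr memvZ // memv_span //.
by have /imageP[g Gg ->] := mem_nth 0 (ltn_ord i); apply: mem_aug_gens.
Qed.

Lemma in_radP x : in_rad x <-> x \in aug.
Proof.
split=> [x_rad | aug_x y].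
  have [c xc] := aug_decomp x.
  have [c0 | c0] := eqVneq c 0; first by rewrite c0 scale0r subr0 in xc.
  have [N cxN] : exists N, (1 - c^-1%:A * x) ^+ N = 0.
    apply: memv_aug_nilpotent.
    have -> : 1 - c^-1%:A * x = - (c^-1 *: (x - c%:A)).
      by rewrite mulr_algl scalerBr scalerA mulVf // scale1r opprB.
    by rewrite memvN memvZ.
  by have := unitrX N (x_rad c^-1%:A); rewrite cxN unitr0.
have [N xN] := memv_aug_nilpotent aug_x.
by apply: (@unitr1B_nilpotent _ _ N); rewrite exprMn xN mulr0.
Qed.

Lemma aug_mul_closed : (aug * aug <= aug)%VS.
Proof.
apply/prodvP => x y /in_radP x_rad _; apply/in_radP => z.
by rewrite [x * y]mulrC mulrA x_rad.
Qed.

Lemma in_rad2P x : in_rad2 x <-> x \in (aug * aug)%VS.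
Proof.
split=> [[n [a [b [ab_rad ->]]]] | ].
  apply: memv_suml => j _; have [/in_radP aj /in_radP bj] := ab_rad j.
  exact: memv_mul.
rewrite unlock.
pose P := [seq (a, b) | a <- vbasis aug, b <- vbasis aug].
have <- : [seq q.1 * q.2 | q <- P] = allpairs *%R (vbasis aug) (vbasis aug).
  by rewrite map_allpairs.
move=> /(coord_span (X := in_tuple _)) ->; set T := [seq q.1 * q.2 | q <- P].
exists (size T), (fun i => coord (in_tuple T) i x *: (nth (0, 0) P i).1),
  (fun i => (nth (0, 0) P i).2).
have sizeP i : (i < size T)%N -> (i < size P)%N by rewrite size_map.
split=> [i|].
  have /allpairsP[q [q1 q2 ->]] := mem_nth (0, 0) (sizeP i (ltn_ord i)).
  by split; apply/in_radP; rewrite ?memvZ // vbasis_mem.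
by apply: eq_bigr => i _; rewrite (nth_map (0, 0)) ?scalerAl ?sizeP.
Qed.

Lemma fullv_sub_1_aug : (fullv <= 1 + aug)%VS.
Proof.
apply/subvP => x _; have [c xc] := aug_decomp x.
by rewrite -(subrK c%:A x) addrC memv_add // memvZ // memv_line.
Qed.

Lemma dim_group_algebra : \dim (fullv : {vspace L}) = (p ^ logn p #|G|)%N.
Proof.
have [_ _ basis_e] := kG.
rewrite (size_basis (X := in_tuple [seq e g | g in G]) basis_e) /= size_map -cardE.
exact: card_pgroup (abelem_pgroup abelG).
Qed.

Lemma sub1_mul_closed (K : {vspace L}) : (aug * aug <= K)%VS ->
  {in G &, forall x y, e x - 1 \in K -> e y - 1 \in K -> e (x * y)%g - 1 \in K}.
Proof.
move=> augK x y Gx Gy Kx Ky.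
have -> : e (x * y)%g - 1 = (e x - 1) * (e y - 1) + (e x - 1) + (e y - 1).
  by rewrite group_algebraM //; ring.
do 2 apply: memvD => //; apply: (subvP augK).
by apply: memv_mul; apply/memv_span/mem_aug_gens.
Qed.

Lemma dim_aug_le : (\dim aug <= logn p #|G| + \dim (aug * aug))%N.
Proof.
have [G1 | ntG] := eqVneq (G : {set gT}) 1%g.
  suff -> : aug = 0%VS by rewrite dimv0.
  apply/eqP; rewrite -subv0; apply/span_subvP => x /aug_gensP[g].
  by rewrite G1 inE => /eqP -> ->; rewrite group_algebra1 subrr mem0v.
pose g i := rVabelem abelG ntG (delta_mx 0 i).
pose X := [seq e (g i) - 1 | i <- enum 'I_(abelem_dim' G).+1].
pose K := (<<X>> + aug * aug)%VS.
have KM := sub1_mul_closed (addvSr <<X>> _ : (aug * aug <= K)%VS).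
have KX z n : z \in G -> e z - 1 \in K -> e (z ^+ n)%g - 1 \in K.
  move=> Gz Kz; elim: n => [|n IH]; first by rewrite expg0 group_algebra1 subrr mem0v.
  by rewrite expgS KM // groupX.
have GK z : z \in G -> e z - 1 \in K.
  (* z is the product of the powers g j ^+ a_j, where a is its coordinate
     vector in 'rV_r('F_p). *)
  move=> Gz; rewrite -(abelem_rV_K abelG ntG Gz) (row_sum_delta (abelem_rV _ _ z)).
  rewrite (big_morph _ (rVabelemD abelG ntG) (rVabelem0 abelG ntG)).
  set y := (\prod_(j < _) _)%g; suff [] : y \in G /\ e y - 1 \in K by [].
  apply: (big_ind (fun z => z \in G /\ e z - 1 \in K)).
  - by rewrite group1 group_algebra1 subrr mem0v.
  - by move=> a b [Ga Ka] [Gb Kb]; rewrite groupM // KM.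
  move=> j _; rewrite rVabelemZ groupX ?mem_rVabelem //; split=> //.
  apply: KX; first exact: mem_rVabelem.
  by rewrite (subvP (addvSl _ _)) // memv_span // (map_f (fun i => e (g i) - 1)) ?mem_enum.
have augK : (aug <= K)%VS by apply/span_subvP => _ /aug_gensP[z Gz ->]; apply: GK.
apply: leq_trans (dimvS augK) _; rewrite -(dim_abelemE abelG ntG).
apply: leq_trans (leq_addr (\dim (<<X>> :&: aug * aug)) _) _.
by rewrite dimv_sum_cap leq_add2r (leq_trans (dim_span X)) // size_map size_enum_ord.
Qed.

Section FlatComplement.
Variables (s : nat) (u : 'I_s -> L).
Hypothesis flat_u : flat_map p u.
Local Notation r := (logn p #|G|).
Local Notation U := <<mktuple u>>%VS.

Lemma flat_prodv_full (w : seq L) m :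
  {subset w <= aug_gens} -> (aug <= U + <<w>> + aug * aug)%VS -> m = size w ->
  (flat_image p u * flat_image p (fun j : 'I_m => w`_j))%VS = fullv.
Proof.
move=> w_aug aug_Uw mw; have [[up _] [u_rad _]] := flat_u.
have p_gt1 := prime_gt1 p_pr; have p_gt0 := prime_gt0 p_pr.
set v := fun j : 'I_m => w`_j; have vw : mktuple v = w :> seq L := mktuple_nth 0 mw.
have vp j : v j ^+ p = 0.
  by apply/aug_gens_expp/w_aug; rewrite -vw -tnth_mktuple mem_tnth.
set A := flat_image p u; set B := flat_image p v.
have WAB : (U + <<w>> <= A * B)%VS.
  rewrite subv_add -{1}vw; apply/andP; split; apply/span_subvP => _ /mapP[i _ ->].
  - by rewrite -[u i]mulr1 memv_mul ?flat_image1 ?flat_image_gen.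
  - by rewrite -[v i]mul1r memv_mul ?flat_image1 ?flat_image_gen.
have Waug : (U + <<w>> <= aug)%VS.
  rewrite subv_add; apply/andP; split; apply/span_subvP => x.
  - by case/mapP => i _ ->; apply/in_radP/u_rad.
  - by move/w_aug; apply: memv_span.
have ABmul := prodv_mul_closed (flat_image_mul_closed up) (flat_image_mul_closed vp).
have augAB := nakayama_subv Waug WAB ABmul aug_Uw aug_nilpotent.
apply/eqP; rewrite eqEsubv subvf (subv_trans fullv_sub_1_aug) // subv_add augAB.
by rewrite andbT -memvE -[1]mulr1 memv_mul ?flat_image1.
Qed.

Lemma flat_complement_seq : exists2 w : seq L, (s + size w)%N = r &
  [/\ {subset w <= aug_gens}, (aug <= U + <<w>> + aug * aug)%VS,
      free w & (<<w>> :&: aug * aug = 0)%VS].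
Proof.
have [_ [u_rad u_indep]] := flat_u.
have [free_u UJ0] : free (mktuple u) /\ (U :&: aug * aug = 0)%VS.
  by apply/free_modvP => c /in_rad2P; apply: u_indep.
have Uaug : (U <= aug)%VS by apply/span_subvP => _ /mapP[i _ ->]; apply/in_radP/u_rad.
have [w w_aug [aug_UJw dimw]] := exists_span_complement aug_gens (U + aug * aug).
have [free_w UJw0] := dimv_add_span_free dimw.
have aug_Uw : (aug <= U + <<w>> + aug * aug)%VS.
  by rewrite -addvA [(<<w>> + _)%VS]addvC addvA.
have dimUJ : \dim (U + aug * aug) = (s + \dim (aug * aug))%N.
  by rewrite (dimv_disjoint_sum UJ0) (eqnP free_u) size_tuple.
have le_sw : (s + size w <= r)%N.
  have UJw_aug : (U + aug * aug + <<w>> <= aug)%VS.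
    by rewrite !subv_add Uaug aug_mul_closed; apply/span_subvP => x /w_aug/memv_span.
  have := dimvS UJw_aug; have := dim_aug_le; rewrite dimw dimUJ; lia.
have le_rs : (r <= s + size w)%N.
  rewrite -(leq_exp2l _ _ (prime_gt1 p_pr)) expnD -dim_group_algebra.
  rewrite -(flat_prodv_full w_aug aug_Uw (erefl (size w))).
  by apply: leq_trans (dim_prodv _ _) _; apply: leq_mul; apply: dim_flat_image.
exists w; first by apply/eqP; rewrite eqn_leq le_sw.
split=> //; apply/eqP.
by rewrite -subv0 -UJw0 [(<<w>> :&: _)%VS]capvC capvS ?addvSr.
Qed.

Lemma flat_complement : exists v : 'I_(r - s) -> L,
  flat_map p v /\ internal_tensor (flat_image p u) (flat_image p v).
Proof.
have [w sizew [w_aug aug_Uw free_w wJ0]] := flat_complement_seq.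
have rsw : (r - s)%N = size w by rewrite -sizew addKn.
pose v (j : 'I_(r - s)) := w`_j; have vw : mktuple v = w :> seq L := mktuple_nth 0 rsw.
have v_aug j : v j \in aug_gens by apply: w_aug; rewrite -vw -tnth_mktuple mem_tnth.
exists v; split.
  split; first by split=> [j | i j]; [apply/aug_gens_expp/v_aug | apply: mulrC].
  split=> [j | c /in_rad2P]; first exact/in_radP/memv_span/v_aug.
  by move: c; apply/free_modvP; rewrite vw; split.
apply: prodv_full_internal_tensor; first exact: flat_prodv_full.
apply: leq_trans (leq_mul (dim_flat_image p u) (dim_flat_image p v)) _.
by rewrite -expnD rsw sizew dim_group_algebra.
Qed.

End FlatComplement.

End GroupAlgebra.

End CommutativeFalgebra.

Lemma group_algebra_mulC (F : fieldType) (L : falgType F) (gT : finGroupType)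
    (G : {group gT}) (e : gT -> L) :
  abelian G -> is_group_algebra G e -> commutative (@GRing.mul L).
Proof.
move=> abG [_ eM basis_e] x y.
have span_e z : z \in <<[seq e g | g in G]>>%VS by rewrite (span_basis basis_e) memvf.
move: (span_e x) (span_e y) => /(coord_span (X := in_tuple _)) ->
  /(coord_span (X := in_tuple _)) ->.
apply: commr_sum => i _; apply: commr_sym; apply: commr_sum => j _.
rewrite /GRing.comm -!scalerAl -!scalerAr !scalerA mulrC; congr (_ *: _).
have /imageP[g Gg ->] := mem_nth 0 (ltn_ord i).
have /imageP[h Gh ->] := mem_nth 0 (ltn_ord j).
by rewrite -!eM // (centsP abG g Gg h Gh).
Qed.

Theorem lemma2p2 (p r s : nat) (F : fieldType) (L : falgType F)
    (gT : finGroupType) (G : {group gT}) (e : gT -> L)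
    (u : 'I_s -> L) :
  prime p -> p \in [pchar F] ->
  (p.-abelem G)%g -> logn p #|G| = r ->
  is_group_algebra G e ->
  flat_map p u ->
  exists v : 'I_(r - s) -> L,
    flat_map p v /\ internal_tensor (flat_image p u) (flat_image p v).
Proof.
move=> p_pr pcharF abelG <- kG flat_u.
have mulC := group_algebra_mulC (abelem_abelian abelG) kG.
exact: (flat_complement (mulC := mulC) p_pr pcharF abelG kG flat_u).
Qed.
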